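(* Let $\lambda,\lambda_1,\sigma,\sigma_1\in\mathbb{C}^*$ and $\eta,\eta_1\in\mathbb{C}$, and let $R$ and $S$ be irreducible restricted $\mathcal{G}$-modules. Then: (1) $\Omega(\lambda,\eta,\sigma,0)\otimes R\cong\Omega(\lambda_1,\eta_1,\sigma_1,0)\otimes S$ as $\mathcal{G}$-modules if and only if $\lambda=\lambda_1$, $\eta=\eta_1$, $\sigma=\sigma_1$ and $R\cong S$; (2) $\Omega(\lambda,\eta,0,\sigma)\otimes R\cong\Omega(\lambda_1,\eta_1,0,\sigma_1)\otimes S$ if and only if $\lambda=\lambda_1$, $\eta=\eta_1$, $\sigma=\sigma_1$ and $R\cong S$; (3) $\Omega(\lambda,\eta,\sigma,0)\otimes R$ and $\Omega(\lambda_1,\eta_1,0,\sigma_1)\otimes S$ are not isomorphic.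
   Context: $\mathcal{G}$ is the complex Lie algebra with basis $\{L_n,H_n,I_n,J_n,\mathbf{c}_1,\mathbf{c}_2,\mathbf{c}_3: n\in\mathbb{Z}\}$ whose brackets of basis elements are $[L_m,L_n]=(n-m)L_{m+n}+\frac{m^3-m}{12}\delta_{m+n,0}\mathbf{c}_1$, $[L_m,H_n]=nH_{m+n}+m^2\delta_{m+n,0}\mathbf{c}_2$, $[H_m,H_n]=m\delta_{m+n,0}\mathbf{c}_3$, $[L_m,I_n]=(n-m)I_{m+n}$, $[L_m,J_n]=(n-m)J_{m+n}$, $[H_m,I_n]=I_{m+n}$, $[H_m,J_n]=-J_{m+n}$ (and antisymmetric counterparts), all other brackets of basis elements zero. $\mathcal{G}=\bigoplus_{i\in\mathbb{Z}}\mathcal{G}^i$ is $\mathbb{Z}$-graded with $\mathcal{G}^i$ spanned by $L_i,H_i,I_i,J_i$ (and also $\mathbf{c}_1,\mathbf{c}_2,\mathbf{c}_3$ when $i=0$). A $\mathcal{G}$-module $R$ is restricted if for every $v\in R$ there is $N\in\mathbb{N}$ with $\mathcal{G}^iv=0$ for all $i>N$. For $\lambda\in\mathbb{C}^*,\eta\in\mathbb{C}$, $\sigma\in\mathbb{C}^*$: $\Omega(\lambda,\eta,\sigma,0)$ is $\mathbb{C}[X,Y]$ with $L_mf(X,Y)=\lambda^mf(X,Y-m)(Y-mX+m\eta)$, $H_mf=\lambda^mXf(X,Y-m)$, $I_mf=\lambda^m\sigma f(X-1,Y-m)$, and $J_m,\mathbf{c}_1,\mathbf{c}_2,\mathbf{c}_3$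 acting as $0$; $\Omega(\lambda,\eta,0,\sigma)$ is $\mathbb{C}[X,Y]$ with $L_mf=\lambda^mf(X,Y-m)(Y+mX+m\eta)$, $H_mf=\lambda^mXf(X,Y-m)$, $J_mf=\lambda^m\sigma f(X+1,Y-m)$, and $I_m,\mathbf{c}_1,\mathbf{c}_2,\mathbf{c}_3$ acting as $0$ ($m\in\mathbb{Z}$). Tensor products carry the action $x(u\otimes v)=xu\otimes v+u\otimes xv$. *)

From HB Require Import structures.
From mathcomp Require Import all_boot all_order all_algebra.
From mathcomp Require Import Rstruct complex.
From mathcomp Require Import mpoly.
Import GRing.Theory.
Set Implicit Arguments. Unset Strict Implicit. Unset Printing Implicit Defensive.
Local Open Scope ring_scope.

Definition CC : numClosedFieldType := (Rdefinitions.R)[i].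

Inductive gbasis : Type :=
  | gL of int | gH of int | gI of int | gJ of int | gc1 | gc2 | gc3.

Definition gdeg (x : gbasis) : int :=
  match x with gL n | gH n | gI n | gJ n => n | _ => 0 end.

Definition kdelta (a : int) : CC := if a == 0 then 1 else 0.

(* [x, y] for basis elements x y, as a finite formal linear combination. *)
Definition brk (x y : gbasis) : seq (CC * gbasis) :=
  match x, y with
  | gL m, gL n => [:: ((n - m)%:~R, gL (m + n));
                      (((m * m * m - m)%:~R / 12%:R) * kdelta (m + n), gc1)]
  | gL m, gH n => [:: (n%:~R, gH (m + n)); ((m * m)%:~R * kdelta (m + n), gc2)]
  | gH n, gL m => [:: (- n%:~R, gH (m + n)); (- ((m * m)%:~R * kdelta (m + n)), gc2)]
  | gH m, gH n => [:: (m%:~R * kdelta (m + n), gc3)]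
  | gL m, gI n => [:: ((n - m)%:~R, gI (m + n))]
  | gI n, gL m => [:: (- (n - m)%:~R, gI (m + n))]
  | gL m, gJ n => [:: ((n - m)%:~R, gJ (m + n))]
  | gJ n, gL m => [:: (- (n - m)%:~R, gJ (m + n))]
  | gH m, gI n => [:: (1, gI (m + n))]
  | gI n, gH m => [:: (-1, gI (m + n))]
  | gH m, gJ n => [:: (-1, gJ (m + n))]
  | gJ n, gH m => [:: (1, gJ (m + n))]
  | _, _ => [::]
  end.

(* A G-module: a complex vector space V with linear operators for the basis
   elements satisfying the bracket relations (this is exactly a Lie algebra
   homomorphism G -> gl(V), written on the basis). *)
Record gmod (V : lmodType CC) := GMod {
  gact : gbasis -> V -> V;
  gact_linear : forall x, linear (gact x);
  gact_bracket : forall x y v,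
    gact x (gact y v) - gact y (gact x v) = \sum_(p <- brk x y) p.1 *: gact p.2 v
}.

Definition restricted (V : lmodType CC) (M : gmod V) : Prop :=
  forall v : V, exists N : nat, forall x, (N%:Z < gdeg x)%R -> gact M x v = 0.

Definition gsubmodule (V : lmodType CC) (M : gmod V) (P : V -> Prop) : Prop :=
  [/\ P 0, (forall u v, P u -> P v -> P (u + v)),
      (forall (k : CC) v, P v -> P (k *: v)) &
      (forall x v, P v -> P (gact M x v))].

Definition irreducible (V : lmodType CC) (M : gmod V) : Prop :=
  (exists v : V, v != 0) /\
  forall P : V -> Prop, gsubmodule M P -> (forall v, P v -> v = 0) \/ (forall v, P v).

Definition gmod_iso (V W : lmodType CC) (M : gmod V) (N : gmod W) : Prop :=
  exists f : V -> W, [/\ linear f, bijective f &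
                        forall x v, f (gact M x v) = gact N x (f v)].

(* C[X,Y], with X = 'X_0 and Y = 'X_1. *)
Definition CXY := {mpoly CC[2]}.

Definition shiftXY (a b : CC) (f : CXY) : CXY :=
  f \mPo [tuple ('X_0 : CXY) + a%:MP; ('X_1 : CXY) + b%:MP].

(* Omega(lam, eta, sig, 0) *)
Definition omegaI (lam eta sig : CC) (x : gbasis) (f : CXY) : CXY :=
  match x with
  | gL m => lam ^ m *: (shiftXY 0 (- m%:~R) f *
                 ('X_1 - (m%:~R : CC) *: 'X_0 + ((m%:~R : CC) * eta)%:MP))
  | gH m => lam ^ m *: ('X_0 * shiftXY 0 (- m%:~R) f)
  | gI m => lam ^ m *: (sig *: shiftXY (-1) (- m%:~R) f)
  | _ => 0
  end.

(* Omega(lam, eta, 0, sig) *)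
Definition omegaJ (lam eta sig : CC) (x : gbasis) (f : CXY) : CXY :=
  match x with
  | gL m => lam ^ m *: (shiftXY 0 (- m%:~R) f *
                 ('X_1 + (m%:~R : CC) *: 'X_0 + ((m%:~R : CC) * eta)%:MP))
  | gH m => lam ^ m *: ('X_0 * shiftXY 0 (- m%:~R) f)
  | gJ m => lam ^ m *: (sig *: shiftXY 1 (- m%:~R) f)
  | _ => 0
  end.

Definition bilinearP (A B W : lmodType CC) (b : A -> B -> W) : Prop :=
  (forall a, linear (b a)) /\ (forall v, linear (fun a => b a v)).

Definition is_tensor (A B T : lmodType CC) (t : A -> B -> T) : Prop :=
  bilinearP t /\
  forall (W : lmodType CC) (b : A -> B -> W), bilinearP b ->
    exists phi : T -> W,
      [/\ linear phi, (forall a v, phi (t a v) = b a v) &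
          forall psi : T -> W, linear psi ->
            (forall a v, psi (t a v) = b a v) -> psi =1 phi].

Definition tensor_gmod (A B T : lmodType CC) (actA : gbasis -> A -> A)
    (MB : gmod B) (MT : gmod T) (t : A -> B -> T) : Prop :=
  is_tensor t /\
  forall x a v, gact MT x (t a v) = t (actA x a) v + t a (gact MB x v).

(* Let phi : Omega (x) R -> Omega' (x) S be an isomorphism and write
   phi (1 (x) v) = sum_i a_i (x) u_i with the u_i linearly independent.  For m
   beyond the restriction bounds of v and of the u_i, the element I_m (resp. J_m)
   acts on both sides through the polynomial factor only: on 1 by the scalar
   lam^m sig, on a_i by lam1^m sig1 times the translation by (-+1, -m).  A
   polynomial with this property for all large m is constant, and if it is
   nonzero then lam = lam1 and sig = sig1.  Hence phi (1 (x) v) = 1 (x) psi v;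
   comparing the actions of H_m and L_m gives eta = eta1, phi (X (x) v) =
   X (x) psi v and phi (Y (x) v) = Y (x) psi v, and as every basis element sends
   1 into span(1, X, Y), psi is an isomorphism R ~ S.  In (3), J_m acts by zero
   on Omega(lam, eta, sig, 0), and the same comparison forces lam1 = 0. *)

From HB Require Import structures.
From mathcomp Require Import all_boot all_order all_algebra sesquilinear.
From mathcomp Require Import Rstruct complex mpoly ring.
From Stdlib Require Import Classical ClassicalDescription IndefiniteDescription.
Import Order.TTheory GRing.Theory Num.Theory.
Set Implicit Arguments. Unset Strict Implicit. Unset Printing Implicit Defensive.
Local Open Scope ring_scope.

HB.instance Definition _ (V : lmodType CC) (M : gmod V) (x : gbasis) :=
  GRing.isLinear.Build CC V V *:%R (gact M x) (gact_linear M x).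

Definition classical_pred (T : Type) (P : T -> Prop) : pred T :=
  fun w => if excluded_middle_informative (P w) then true else false.

Lemma classical_predP (T : Type) (P : T -> Prop) w : reflect (P w) (classical_pred P w).
Proof. by rewrite /classical_pred; case: excluded_middle_informative => h; constructor. Qed.

Section Span.
Variables (T : lmodType CC) (G : T -> Prop).

Definition subspace (P : T -> Prop) := [/\ P 0, (forall x y, P x -> P y -> P (x + y))
  & (forall (k : CC) x, P x -> P (k *: x))].

Definition in_span (w : T) : Prop :=
  forall P, subspace P -> (forall g, G g -> P g) -> P w.

Lemma in_span_closed : GRing.subsemimod_closed (classical_pred in_span).
Proof.
split; first split.
- by apply/classical_predP => P [].
- move=> x y /classical_predP hx /classical_predP hy; apply/classical_predP => P sP hG.
  by case: (sP) => _ PD _; apply: PD; [apply: hx | apply: hy].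
- move=> k x /classical_predP hx; apply/classical_predP => P sP hG.
  by case: (sP) => _ _ PZ; apply: PZ; apply: hx.
Qed.

HB.instance Definition _ :=
  GRing.isSubmodClosed.Build CC T (classical_pred in_span) in_span_closed.
Definition span_type := {w : T | classical_pred in_span w}.
HB.instance Definition _ := [isSub of span_type for (@sval T _)].
HB.instance Definition _ := [Choice of span_type by <:].
HB.instance Definition _ := [SubChoice_isSubLmodule of span_type by <:].

End Span.

Section Tensor.
Variables (A B T : lmodType CC) (t : A -> B -> T).
Hypothesis tT : is_tensor t.

HB.instance Definition _ :=
  bilinear_isBilinear.Build CC A B T *:%R *:%R t (tT.1.2, tT.1.1).

Lemma tensor_lift (W : lmodType CC) (b : A -> B -> W) : bilinearP b ->
  exists f : {linear T -> W}, forall a v, f (t a v) = b a v.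
Proof.
case: tT => _ /[apply] -[f [lf fE _]].
by exists (HB.pack_for {linear T -> W} f (GRing.isLinear.Build CC T W *:%R f lf)).
Qed.

Lemma tensor_ext (W : lmodType CC) (f g : {linear T -> W}) :
  (forall a v, f (t a v) = g (t a v)) -> f =1 g.
Proof.
move=> fg.
have bf : bilinearP (fun a v => f (t a v)).
  by split=> [a|v] k x y; rewrite /= ?linearPr ?linearPl linearP.
case: tT => _ /(_ W _ bf) [h [_ _ hU]] w.
by rewrite (hU f (linearP f) (fun _ _ => erefl)) (hU g (linearP g) (fun a v => esym (fg a v))).
Qed.

Lemma tensor_span (P : T -> Prop) : subspace P -> (forall a v, P (t a v)) -> forall w, P w.
Proof.
move=> sP Pt w.
pose G w := exists a v, w = t a v.
have Gt a v : classical_pred (in_span G) (t a v).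
  by apply/classical_predP => Q _; apply; exists a, v.
pose b a v : span_type G := exist _ (t a v) (Gt a v).
have bb : bilinearP b.
  by split=> [a|v] k x y; apply: val_inj; rewrite /= ?linearPr ?linearPl.
have [f fE] := tensor_lift bb.
(* [val \o f] and the identity agree on pure tensors. *)
have -> : w = (val \o f) w by apply: (tensor_ext (f := idfun)) => a v; rewrite /= fE.
by move/classical_predP: (valP (f w)); apply=> // g [a [v ->]].
Qed.

End Tensor.

Section TensorIso.
Variables (act : gbasis -> CXY -> CXY) (VR VS T1 T2 : lmodType CC).
Variables (R : gmod VR) (S : gmod VS) (M1 : gmod T1) (M2 : gmod T2).
Variables (t1 : CXY -> VR -> T1) (t2 : CXY -> VS -> T2).
Hypotheses (tg1 : tensor_gmod act R M1 t1) (tg2 : tensor_gmod act S M2 t2).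

HB.instance Definition _ :=
  bilinear_isBilinear.Build CC _ _ _ *:%R *:%R t1 (tg1.1.1.2, tg1.1.1.1).
HB.instance Definition _ :=
  bilinear_isBilinear.Build CC _ _ _ *:%R *:%R t2 (tg2.1.1.2, tg2.1.1.1).

Lemma tensor_gmod_iso : gmod_iso R S -> gmod_iso M1 M2.
Proof.
move=> [f [lf [g fK gK] fM]].
have lg : linear g by move=> k x y; apply: (can_inj fK); rewrite gK lf !gK.
have [F FE] : exists F : {linear T1 -> T2}, forall a v, F (t1 a v) = t2 a (f v).
  by apply: (tensor_lift tg1.1); split=> [a|v] k x y; rewrite /= ?lf ?linearPr ?linearPl.
have [G GE] : exists G : {linear T2 -> T1}, forall a u, G (t2 a u) = t1 a (g u).
  by apply: (tensor_lift tg2.1); split=> [a|u] k x y; rewrite /= ?lg ?linearPr ?linearPl.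
exists F; split; first exact: linearP.
- exists G => w.
  + by apply: (tensor_ext tg1.1 (f := G \o F) (g := idfun)) => a v; rewrite /= FE GE fK.
  + by apply: (tensor_ext tg2.1 (f := F \o G) (g := idfun)) => a u; rewrite /= GE FE gK.
- move=> x; apply: (tensor_ext tg1.1 (f := F \o gact M1 x) (g := gact M2 x \o F)) => a v.
  by rewrite /= tg1.2 linearD !FE tg2.2 fM.
Qed.

End TensorIso.

Definition lin_indep (V : lmodType CC) k (u : 'I_k -> V) :=
  forall c : 'I_k -> CC, \sum_i c i *: u i = 0 -> forall i, c i = 0.

Section TensorPoly.
Variables (B T : lmodType CC) (t : CXY -> B -> T).
Hypothesis tT : is_tensor t.

HB.instance Definition _ :=
  bilinear_isBilinear.Build CC _ _ _ *:%R *:%R t (tT.1.2, tT.1.1).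

Lemma tensor_coef (m : 'X_{1..2}) :
  exists c : {linear T -> B}, forall a v, c (t a v) = a@_m *: v.
Proof.
apply: (tensor_lift tT); split=> [a|v] k x y /=.
- by rewrite scalerDr !scalerA mulrC.
- by rewrite mcoeffD mcoeffZ scalerDl scalerA.
Qed.

Lemma tensor1_inj : injective (t 1).
Proof.
have [c cE] := tensor_coef 0%MM.
by move=> u v /(congr1 c); rewrite !cE mcoeff1 eqxx !scale1r.
Qed.

Lemma tensor_free_eq0 k (a : 'I_k -> CXY) (u : 'I_k -> B) :
  lin_indep u -> \sum_i t (a i) (u i) = 0 -> forall i, a i = 0.
Proof.
move=> iu a0 i; apply/mpolyP => m; rewrite mcoeff0.
have [c cE] := tensor_coef m.
by move: (congr1 c a0); rewrite linear_sum linear0; under eq_bigr do rewrite cE; move/iu.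
Qed.

Lemma tensor_sum_pure (w : T) :
  exists k (a : 'I_k -> CXY) (u : 'I_k -> B), w = \sum_i t (a i) (u i).
Proof.
move: w; apply: (tensor_span tT); first split.
- by exists 0%N, (fun _ => 0), (fun _ => 0); rewrite big_ord0.
- move=> _ _ [k1 [a1 [u1 ->]]] [k2 [a2 [u2 ->]]].
  exists (k1 + k2)%N, (fun i => match split i with inl j => a1 j | inr j => a2 j end),
    (fun i => match split i with inl j => u1 j | inr j => u2 j end).
  rewrite big_split_ord; congr (_ + _); apply: eq_bigr => i _.
  + by move: (unsplitK (inl 'I_k2 i)) => /= ->.
  + by move: (unsplitK (inr 'I_k1 i)) => /= ->.
- move=> c _ [k [a [u ->]]]; exists k, (fun i => c *: a i), u.
  by rewrite scaler_sumr; apply: eq_bigr => i _; rewrite linearZl_LR.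
- by move=> a v; exists 1%N, (fun _ => a), (fun _ => v); rewrite big_ord1.
Qed.

Lemma tensor_sum_free k (a : 'I_k -> CXY) (u : 'I_k -> B) :
  exists k' (a' : 'I_k' -> CXY) (u' : 'I_k' -> B),
    lin_indep u' /\ \sum_i t (a i) (u i) = \sum_i t (a' i) (u' i).
Proof.
elim: k a u => [|k IHk] a u.
  by exists 0%N, a, u; split=> // c _ [].
have [iu|] := classic (lin_indep u); first by exists k.+1, a, u.
move=> /not_all_ex_not [c /not_all_ex_not [c0 /not_all_ex_not [j /eqP cj]]].
have uj : u j = - \sum_(i < k) (c (lift j i) / c j) *: u (lift j i).
  apply: (scalerI cj); apply/eqP; rewrite scalerN scaler_sumr -addr_eq0.
  rewrite (bigD1_ord j) //= in c0; rewrite -[X in _ == X]c0; apply/eqP.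
  by congr (_ + _); apply: eq_bigr => i _; rewrite scalerA mulrCA mulfV ?mulr1.
pose a' i := a (lift j i) - (c (lift j i) / c j) *: a j.
have [k' [a'' [u' [iu' e]]]] := IHk a' (fun i => u (lift j i)).
exists k', a'', u'; split=> //; rewrite -e.
rewrite (bigD1_ord j) //= {1}uj linearNr linear_sumr -sumrN -big_split /=.
by apply: eq_bigr => i _; rewrite /a' linearBl linearZl_LR linearZr_LR addrC.
Qed.

Lemma tensor_free_decomp (w : T) :
  exists k (a : 'I_k -> CXY) (u : 'I_k -> B), lin_indep u /\ w = \sum_i t (a i) (u i).
Proof.
have [k [a [u ->]]] := tensor_sum_pure w.
exact: tensor_sum_free.
Qed.

End TensorPoly.

Section PolyShift.
Variable F : numDomainType.
Implicit Types (p h : {poly F}) (s k : F).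

Lemma poly_eq0_inj_roots p (f : nat -> F) :
  injective f -> (forall n, p.[f n] = 0) -> p = 0.
Proof.
move=> f_inj pf0; apply: (@roots_geq_poly_eq0 _ p (map f (seq.iota 0 (size p)))).
- by apply/allP => _ /mapP [n _ ->]; apply/rootP.
- by rewrite map_inj_uniq // iota_uniq.
- by rewrite size_map size_iota.
Qed.

Lemma natr_inj : injective (fun n : nat => n%:R : F).
Proof. by move=> m n /eqP; rewrite eqr_nat => /eqP. Qed.

Lemma poly_eq0_eval p : (forall x, p.[x] = 0) -> p = 0.
Proof. by move=> p0; apply: (poly_eq0_inj_roots natr_inj). Qed.

Lemma poly_shift_eigen h s k : h != 0 -> (forall y, h.[y + s] = k * h.[y]) -> k = 1.
Proof.
move=> h0 hs.
have hsE : h \Po ('X + s%:P) = k *: h.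
  apply/eqP; rewrite -subr_eq0; apply/eqP/poly_eq0_eval => x.
  by rewrite !hornerE horner_comp !hornerE hs subrr.
move/(congr1 lead_coef)/eqP: hsE.
rewrite lead_coef_comp ?size_XaddC // lead_coefXaddC expr1n mulr1 lead_coefZ.
by rewrite -[X in X == _]mul1r eq_sym (inj_eq (mulIf _)) ?lead_coef_eq0 // => /eqP.
Qed.

Lemma poly_shift_invariant h s : s != 0 ->
  (forall y, h.[y + s] = h.[y]) -> forall y, h.[y] = h.[0].
Proof.
move=> s0 hs y.
have hn n : h.[n%:R * s] = h.[0].
  by elim: n => [|n IHn]; rewrite ?mul0r // -addn1 natrD mulrDl mul1r hs.
have ns_inj : injective (fun n : nat => n%:R * s).
  by move=> m n /(mulIf s0) /natr_inj.
have : h - h.[0]%:P = 0.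
  by apply: (poly_eq0_inj_roots ns_inj) => n; rewrite !hornerE hn subrr.
by move/(congr1 (horner^~ y)); rewrite /= !hornerE => /eqP; rewrite subr_eq0 => /eqP.
Qed.

End PolyShift.

Definition meval2 (a : CXY) (x y : CC) : CC :=
  a.@[fun i : 'I_2 => if i == ord0 then x else y].

Lemma meval2_shift a s b x y : meval2 (shiftXY s b a) x y = meval2 a (x + s) (y + b).
Proof.
rewrite /meval2 /shiftXY comp_mpoly_meval; apply: meval_eq => i.
by have [j ->|->] := unliftP ord0 i; rewrite ?ord1 (tnth_nth 0) /= mevalD mevalXU mevalC.
Qed.

Lemma mmap_rmorph n (R S S' : comNzRingType) (g : {rmorphism S -> S'}) (f : R -> S)
    (h : 'I_n -> S) (p : {mpoly R[n]}) :
  g (mmap f h p) = mmap (g \o f) (g \o h) p.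
Proof.
rewrite /mmap rmorph_sum; apply: eq_bigr => m _; rewrite rmorphM /mmap1 rmorph_prod.
by congr (_ * _); apply: eq_bigr => i _; rewrite rmorphXn.
Qed.

Lemma mmap_ext n (R S : comNzRingType) (f1 f2 : R -> S) (h1 h2 : 'I_n -> S) (p : {mpoly R[n]}) :
  f1 =1 f2 -> h1 =1 h2 -> mmap f1 h1 p = mmap f2 h2 p.
Proof.
move=> ef eh; apply: eq_bigr => m _.
by rewrite ef (mmap1_eq _ eh).
Qed.

(* [X_0] becomes the outer variable and [X_1] the inner one. *)
Definition poly2_of_mpoly (a : CXY) : {poly {poly CC}} :=
  mmap (fun c => c%:P%:P) (fun i : 'I_2 => if i == ord0 then 'X else 'X%:P) a.

Lemma poly2_of_mpoly_eval a x y : ((poly2_of_mpoly a).[x%:P]).[y] = meval2 a x y.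
Proof.
rewrite -!horner_evalE (mmap_rmorph (horner_eval x%:P)) (mmap_rmorph (horner_eval y)).
apply: mmap_ext => [c|i] /=; first by rewrite !horner_evalE !hornerC.
by case: (i == ord0); rewrite !horner_evalE ?hornerX ?hornerC ?hornerX.
Qed.

Lemma poly2_of_mpoly_coef a (m : 'X_{1..2}) :
  ((poly2_of_mpoly a)`_(m ord0))`_(m (lift ord0 ord0)) = a@_m.
Proof.
rewrite {2}(mpolyE a) /poly2_of_mpoly /mmap (coef_sum (R := {poly CC})) (coef_sum (R := CC)).
rewrite raddf_sum /=; apply: eq_bigr => m' _.
rewrite mcoeffZ mcoeffX /mmap1 big_ord_recl big_ord1 /=.
rewrite -rmorphXn mulrCA mulrC -polyCM coefCM coefXn mulr_natr coefMn coefCM coefXn.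
have -> : (m' == m) = (m ord0 == m' ord0) && (m (lift ord0 ord0) == m' (lift ord0 ord0)).
  apply/eqP/andP => [->|[/eqP e0 /eqP e1]] //; apply/mnmP => i.
  by have [j ->|->] := unliftP ord0 i; rewrite ?ord1.
by case: (m ord0 == m' ord0); case: (_ == _); rewrite ?mulr1 ?mulr0.
Qed.

Definition sliceY (a : CXY) (x : CC) : {poly CC} := (poly2_of_mpoly a).[x%:P].

Lemma sliceY_eval a x y : (sliceY a x).[y] = meval2 a x y.
Proof. exact: poly2_of_mpoly_eval. Qed.

Definition sliceX (a : CXY) (y : CC) : {poly CC} := map_poly (horner_eval y) (poly2_of_mpoly a).

Lemma sliceX_eval a x y : (sliceX a y).[x] = meval2 a x y.
Proof.
have := horner_map (horner_eval y) (poly2_of_mpoly a) x%:P.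
by rewrite /= !horner_evalE hornerC poly2_of_mpoly_eval.
Qed.

Lemma meval2_eq0 (a : CXY) : (forall x y, meval2 a x y = 0) -> a = 0.
Proof.
move=> a0.
have P0 : poly2_of_mpoly a = 0.
  apply/polyP => i; rewrite coef0; apply: poly_eq0_eval => y.
  have sX0 : sliceX a y = 0 by apply: poly_eq0_eval => x; rewrite sliceX_eval.
  by move: (congr1 (fun p : {poly CC} => p`_i) sX0); rewrite /sliceX coef_map /= coef0 horner_evalE.
by apply/mpolyP => m; rewrite mcoeff0 -poly2_of_mpoly_coef P0 !coef0.
Qed.

Lemma meval2_neq0 (a : CXY) : a != 0 -> exists x y, meval2 a x y != 0.
Proof.
move=> a0; apply: NNPP => nz; move/eqP: a0; apply; apply: meval2_eq0 => x y.
by apply/eqP; apply: NNPP => nzxy; apply: nz; exists x, y; apply/negP.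
Qed.

Lemma meval2Z c a x y : meval2 (c *: a) x y = c * meval2 a x y.
Proof. exact: mevalZ. Qed.

Lemma meval2B a b x y : meval2 (a - b) x y = meval2 a x y - meval2 b x y.
Proof. exact: mevalB. Qed.

Lemma meval2C c x y : meval2 c%:MP x y = c.
Proof. exact: mevalC. Qed.

Lemma shiftXY1 a b : shiftXY a b 1 = 1.
Proof. exact: comp_mpoly1. Qed.

Lemma mpolyC_scale1 (c : CC) : c%:MP = c *: (1 : CXY).
Proof. by rewrite -mul_mpolyC mulr1. Qed.

Lemma meval2_translateY_eigen (a : CXY) (b k : CC) : a != 0 -> b != 0 ->
  (forall x y, meval2 a x (y + b) = k * meval2 a x y) ->
  k = 1 /\ forall x y, meval2 a x y = meval2 a x 0.
Proof.
move=> a0 b0 ab; have [x0 [y0 nz]] := meval2_neq0 a0.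
have k1 : k = 1.
  apply: (poly_shift_eigen (h := sliceY a x0) (s := b)) => [|y]; last by rewrite !sliceY_eval.
  by apply: contraNneq nz => sY0; rewrite -sliceY_eval sY0 horner0.
split=> // x y; rewrite -!sliceY_eval; apply: (poly_shift_invariant b0) => z.
by rewrite !sliceY_eval ab k1 mul1r.
Qed.

Lemma meval2_translateX_eigen (a : CXY) (s k : CC) : a != 0 -> s != 0 ->
  (forall x y, meval2 a (x + s) y = k * meval2 a x y) ->
  k = 1 /\ forall x y, meval2 a x y = meval2 a 0 y.
Proof.
move=> a0 s0 sa; have [x0 [y0 nz]] := meval2_neq0 a0.
have k1 : k = 1.
  apply: (poly_shift_eigen (h := sliceX a y0) (s := s)) => [|x]; last by rewrite !sliceX_eval.
  by apply: contraNneq nz => sX0; rewrite -sliceX_eval sX0 horner0.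
split=> // x y; rewrite -!sliceX_eval; apply: (poly_shift_invariant s0) => z.
by rewrite !sliceX_eval sa k1 mul1r.
Qed.

Lemma shift_eigen_const (a : CXY) (s lA sA l1 s1 : CC) (N : nat) :
  s != 0 -> l1 != 0 -> s1 != 0 ->
  (forall m, (N <= m)%N -> (lA ^+ m * sA) *: a = (l1 ^+ m * s1) *: shiftXY s (- m%:R) a) ->
  a = (a@_0)%:MP /\ (a != 0 -> lA = l1 /\ sA = s1).
Proof.
move=> s0 l10 s10 aE.
have [->|a0] := eqVneq a 0; first by rewrite mcoeff0 mpolyC0.
have Ea m x y : (N <= m)%N ->
    lA ^+ m * sA * meval2 a x y = l1 ^+ m * s1 * meval2 a (x + s) (y - m%:R).
  by move=> Nm; move: (congr1 (meval2^~ x ^~ y) (aE m Nm)); rewrite /= !meval2Z meval2_shift.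
have LN : l1 ^+ N * s1 != 0 by rewrite mulf_neq0 ?expf_neq0.
have cN : lA ^+ N * sA != 0.
  apply: contra_neq a0 => c0; apply: meval2_eq0 => x y.
  move: (Ea N (x - s) (y + N%:R) (leqnn N)); rewrite c0 mul0r subrK addrK.
  by move/esym/eqP; rewrite mulf_eq0 (negbTE LN) => /eqP.
(* [m = N.+1] at [y] against [m = N] at [y - 1]. *)
have aY x y : meval2 a x (y + -1) = lA / l1 * meval2 a x y.
  apply: (mulfI cN); apply: (mulfI l10).
  transitivity (lA ^+ N.+1 * sA * meval2 a x y); last by rewrite exprS; field.
  rewrite Ea // Ea // (_ : y - N.+1%:R = y + -1 - N%:R) ?exprS; first ring.
  by rewrite -addn1 natrD; ring.
have N10 : (-1 : CC) != 0 by rewrite oppr_eq0 oner_eq0.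
have [/divr1_eq lAl1 aYc] := meval2_translateY_eigen a0 N10 aY.
subst lA.
have aX x y : meval2 a (x + s) y = sA / s1 * meval2 a x y.
  have e := Ea N x (y + N%:R) (leqnn N); rewrite addrK (aYc x) (aYc (x + s)) in e.
  rewrite (aYc (x + s)) (aYc x); apply: (mulfI LN).
  by rewrite -e; field.
have [/divr1_eq sAs1 aXc] := meval2_translateX_eigen a0 s0 aX.
have ac : a = (meval2 a 0 0)%:MP.
  apply/eqP; rewrite -subr_eq0; apply/eqP/meval2_eq0 => x y.
  by rewrite meval2B meval2C aYc aXc subrr.
split=> [|//]; rewrite {1}ac; congr (_%:MP).
by rewrite {2}ac mcoeffC eqxx mulr1.
Qed.

Definition affine_XY (p : CXY) := exists c0 c1 c2, p = c0 *: 1 + c1 *: 'X_0 + c2 *: 'X_1.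

Lemma affine_XY0 : affine_XY 0.
Proof. by exists 0, 0, 0; rewrite !scale0r !addr0. Qed.

Lemma affine_XY1 : affine_XY 1.
Proof. by exists 1, 0, 0; rewrite !scale0r !addr0 scale1r. Qed.

Lemma affine_XYX0 : affine_XY 'X_0.
Proof. by exists 0, 1, 0; rewrite !scale0r add0r addr0 scale1r. Qed.

Lemma affine_XYL c d : affine_XY ('X_1 + c *: 'X_0 + d%:MP).
Proof.
by exists d, c, 1; rewrite scale1r mpolyC_scale1 addrC -addrA [_ + 'X_1]addrC addrA.
Qed.

Lemma affine_XYZ c p : affine_XY p -> affine_XY (c *: p).
Proof.
move=> [c0 [c1 [c2 ->]]]; exists (c * c0), (c * c1), (c * c2).
by rewrite !scalerDr !scalerA.
Qed.

Lemma restricted_family (V : lmodType CC) (M : gmod V) : restricted M ->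
  forall k (u : 'I_k -> V), exists N : nat,
    forall i x, (N%:Z < gdeg x)%R -> gact M x (u i) = 0.
Proof.
move=> rM; elim=> [|k IHk] u; first by exists 0%N => -[].
have [N1 uN1] := IHk (fun i => u (lift ord0 i)).
have [N0 uN0] := rM (u ord0).
exists (maxn N0 N1) => i x Nx.
have [j ->|->] := unliftP ord0 i.
- by apply: uN1; apply: le_lt_trans Nx; rewrite lez_nat leq_maxr.
- by apply: uN0; apply: le_lt_trans Nx; rewrite lez_nat leq_maxl.
Qed.

Section TensorModuleIso.
Variables (VR VS T1 T2 : lmodType CC) (R : gmod VR) (S : gmod VS).
Variables (M1 : gmod T1) (M2 : gmod T2) (actA actB : gbasis -> CXY -> CXY).
Variables (t1 : CXY -> VR -> T1) (t2 : CXY -> VS -> T2) (phi : T1 -> T2).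
Hypotheses (rR : restricted R) (rS : restricted S).
Hypotheses (tg1 : tensor_gmod actA R M1 t1) (tg2 : tensor_gmod actB S M2 t2).
Hypotheses (lphi : linear phi) (iphi : injective phi)
  (phiM : forall x w, phi (gact M1 x w) = gact M2 x (phi w)).

HB.instance Definition _ :=
  bilinear_isBilinear.Build CC _ _ _ *:%R *:%R t1 (tg1.1.1.2, tg1.1.1.1).
HB.instance Definition _ :=
  bilinear_isBilinear.Build CC _ _ _ *:%R *:%R t2 (tg2.1.1.2, tg2.1.1.1).
HB.instance Definition _ := GRing.isLinear.Build CC T1 T2 *:%R phi lphi.

Lemma iso_one_tensor_neq0 v u : phi (t1 1 v) = t2 1 u -> v != 0 -> u != 0.
Proof.
move=> phivE; apply: contra_neq => u0; apply: (tensor1_inj tg1.1); apply: iphi.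
by rewrite phivE u0 !linear0r linear0.
Qed.

Section Weight.
Variables (K : int -> gbasis) (lA sA l1 s1 s : CC).
Hypotheses (degK : forall m, gdeg (K m) = m) (s0 : s != 0) (l10 : l1 != 0) (s10 : s1 != 0).
Hypotheses (KA : forall m, actA (K m) 1 = (lA ^ m * sA) *: 1)
  (KB : forall m f, actB (K m) f = (l1 ^ m * s1) *: shiftXY s (- m%:~R) f).

Lemma iso_weight_eq v k (a : 'I_k -> CXY) (u : 'I_k -> VS) :
  lin_indep u -> phi (t1 1 v) = \sum_i t2 (a i) (u i) ->
  exists N, forall m, (N <= m)%N -> forall i,
    (lA ^+ m * sA) *: a i = (l1 ^+ m * s1) *: shiftXY s (- m%:R) (a i).
Proof.
move=> iu phivE.
have [Nv vN] := rR v; have [Nu uN] := restricted_family rS u.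
exists (maxn Nv Nu).+1 => m Nm.
have ltK Nx : (Nx <= maxn Nv Nu)%N -> (Nx%:Z < gdeg (K m))%R.
  by move=> Nx_le; rewrite degK ltz_nat; apply: leq_ltn_trans Nm.
have e1 : gact M2 (K m) (phi (t1 1 v)) = (lA ^+ m * sA) *: phi (t1 1 v).
  by rewrite -phiM tg1.2 KA vN ?ltK ?leq_maxl // linear0r addr0 linearZl_LR linearZ.
have e2 : gact M2 (K m) (phi (t1 1 v)) =
    \sum_i t2 ((l1 ^+ m * s1) *: shiftXY s (- m%:R) (a i)) (u i).
  rewrite phivE linear_sum /=; apply: eq_bigr => i _.
  by rewrite tg2.2 KB uN ?ltK ?leq_maxr // linear0r addr0.
suff /(tensor_free_eq0 tg2.1 iu) d0 : \sum_i t2 ((lA ^+ m * sA) *: a i -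
    (l1 ^+ m * s1) *: shiftXY s (- m%:R) (a i)) (u i) = 0.
  by move=> i; apply/eqP; rewrite -subr_eq0 d0.
under eq_bigr do rewrite linearBl linearZl_LR.
by rewrite sumrB -e2 -scaler_sumr -phivE -e1 subrr.
Qed.

Lemma iso_one_tensor v :
  (exists u, phi (t1 1 v) = t2 1 u) /\ (v != 0 -> lA = l1 /\ sA = s1).
Proof.
have [k [a [u [iu phivE]]]] := tensor_free_decomp tg2.1 (phi (t1 1 v)).
have [N aN] := iso_weight_eq iu phivE.
have aC i := @shift_eigen_const (a i) s lA sA l1 s1 N s0 l10 s10 (fun m Nm => aN m Nm i).
split.
  exists (\sum_i (a i)@_0 *: u i); rewrite phivE linear_sumr; apply: eq_bigr => i _.
  by rewrite {1}(aC i).1 -[_%:MP]mulr1 mul_mpolyC linearZl_LR linearZr_LR.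
move=> v0.
have w0 : phi (t1 1 v) != 0.
  apply: contra_neq v0 => w0; apply: (tensor1_inj tg1.1); apply: iphi.
  by rewrite w0 linear0r linear0.
have /existsP [i ai] : [exists i, a i != 0].
  apply: contraNT w0 => /existsPn a0; apply/eqP; rewrite phivE big1 // => i _.
  by move/negbNE/eqP: (a0 i) => ->; rewrite linear0l.
by have [_ /(_ ai)] := aC i.
Qed.

End Weight.

Lemma iso_XY_tensor (lam eta eta1 e : CC) v u : lam != 0 ->
  (forall m, actA (gH m) 1 = lam ^ m *: 'X_0) ->
  (forall m, actB (gH m) 1 = lam ^ m *: 'X_0) ->
  (forall m, actA (gL m) 1 = lam ^ m *: ('X_1 + (e * m%:~R) *: 'X_0 + (m%:~R * eta)%:MP)) ->
  (forall m, actB (gL m) 1 = lam ^ m *: ('X_1 + (e * m%:~R) *: 'X_0 + (m%:~R * eta1)%:MP)) ->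
  phi (t1 1 v) = t2 1 u ->
  [/\ phi (t1 'X_0 v) = t2 'X_0 u, (u != 0 -> eta = eta1)
    & (eta = eta1 -> phi (t1 'X_1 v) = t2 'X_1 u)].
Proof.
move=> lam0 HA HB LA LB phivE.
have [Nv vN] := rR v; have [Nu uN] := rS u.
pose N := (maxn Nv Nu).+1.
have ltN m : (N <= m)%N -> (Nv%:Z < m%:Z)%R /\ (Nu%:Z < m%:Z)%R.
  by move=> Nm; rewrite !ltz_nat; split; apply: leq_trans Nm; rewrite ltnS ?leq_maxl ?leq_maxr.
have lamm m : lam ^+ m != 0 by rewrite expf_neq0.
have phiX : phi (t1 'X_0 v) = t2 'X_0 u.
  have [vN' uN'] := ltN N (leqnn N).
  move: (phiM (gH N) (t1 1 v)); rewrite phivE tg1.2 tg2.2 HA HB vN // uN //.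
  by rewrite !linear0r !addr0 !linearZl_LR linearZ => /(scalerI (lamm N)).
have phiY m : (N <= m)%N ->
    phi (t1 'X_1 v) + (m%:R * eta) *: t2 1 u = t2 'X_1 u + (m%:R * eta1) *: t2 1 u.
  move=> Nm; have [vN' uN'] := ltN m Nm.
  move: (phiM (gL m) (t1 1 v)); rewrite phivE tg1.2 tg2.2 LA LB vN // uN //.
  rewrite !linear0r !addr0 !linearZl_LR linearZ => /(scalerI (lamm m)).
  rewrite !linearDl !linearD !mpolyC_scale1 !linearZl_LR !linearZ /= phiX phivE.
  by rewrite [LHS]addrAC [RHS]addrAC => /addIr.
have etaE : eta *: t2 1 u = eta1 *: t2 1 u.
  have := phiY N.+1 (leqnSn N); rewrite -[N.+1]addn1 natrD !mulrDl !mul1r !scalerDl !addrA phiY //.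
  exact: addrI.
split=> [//||ee]; last by move: (phiY N (leqnn N)); rewrite ee => /addIr.
move=> u0; have w0 : t2 1 u != 0.
  by apply: contra_neq u0 => w0; apply: (tensor1_inj tg2.1); rewrite w0 linear0r.
apply/eqP; rewrite -subr_eq0; move/eqP: etaE; rewrite -subr_eq0 -scalerBl scaler_eq0.
by rewrite (negbTE w0) orbF.
Qed.

Lemma iso_factor (psi : VR -> VS) :
  (forall v, phi (t1 1 v) = t2 1 (psi v)) ->
  (forall v, phi (t1 'X_0 v) = t2 'X_0 (psi v) /\ phi (t1 'X_1 v) = t2 'X_1 (psi v)) ->
  (forall x, actA x 1 = actB x 1) ->
  (forall x, affine_XY (actA x 1)) ->
  [/\ linear psi, injective psi & forall x v, psi (gact R x v) = gact S x (psi v)].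
Proof.
move=> psiE psiXY actAB act1.
split.
- move=> k x y; apply: (tensor1_inj tg2.1).
  by rewrite -psiE !linearPr linearP /= !psiE.
- move=> x y /(congr1 (t2 1)); rewrite -!psiE => /iphi; exact: (tensor1_inj tg1.1).
- move=> x v; apply: (tensor1_inj tg2.1).
  move: (phiM x (t1 1 v)); rewrite tg1.2 psiE tg2.2 linearD /= psiE -actAB.
  have [c0 [c1 [c2 ->]]] := act1 x; have [phiX phiY] := psiXY v.
  by rewrite !linearDl !linearZl_LR !linearD !linearZ /= psiE phiX phiY => /addrI.
Qed.

End TensorModuleIso.

(* Omega(lam, eta, sig, 0) is the instance [K = gI], [e = s = -1], and
   Omega(lam, eta, 0, sig) the instance [K = gJ], [e = s = 1]. *)
Section OmegaFamily.
Variables (Om : CC -> CC -> CC -> gbasis -> CXY -> CXY) (K : int -> gbasis) (e s : CC).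
Hypotheses (s0 : s != 0) (degK : forall m, gdeg (K m) = m).
Hypothesis OmK :
  forall l et sg m f, Om l et sg (K m) f = (l ^ m * sg) *: shiftXY s (- m%:~R) f.
Hypothesis OmH : forall l et sg m, Om l et sg (gH m) 1 = l ^ m *: 'X_0.
Hypothesis OmL : forall l et sg m,
  Om l et sg (gL m) 1 = l ^ m *: ('X_1 + (e * m%:~R) *: 'X_0 + (m%:~R * et)%:MP).
Hypothesis Om1 : forall l et sg x, affine_XY (Om l et sg x 1).

Variables (lam eta sig lam1 eta1 sig1 : CC).
Hypotheses (lam0 : lam != 0) (lam10 : lam1 != 0) (sig0 : sig != 0) (sig10 : sig1 != 0).
Variables (VR VS T1 T2 : lmodType CC) (R : gmod VR) (S : gmod VS).
Variables (M1 : gmod T1) (M2 : gmod T2) (t1 : CXY -> VR -> T1) (t2 : CXY -> VS -> T2).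
Hypotheses (rR : restricted R) (iR : irreducible R) (rS : restricted S).
Hypotheses (tg1 : tensor_gmod (Om lam eta sig) R M1 t1)
  (tg2 : tensor_gmod (Om lam1 eta1 sig1) S M2 t2).

Let OmK1 l et sg m : Om l et sg (K m) 1 = (l ^ m * sg) *: 1.
Proof. by rewrite OmK shiftXY1. Qed.

Lemma omega_tensor_iso_params : gmod_iso M1 M2 -> [/\ lam = lam1, eta = eta1 & sig = sig1].
Proof.
move=> [phi [lphi [g phiK _] phiM]]; have iphi := can_inj phiK.
have [[v0 v00] _] := iR.
have [[u0 phiv0] /(_ v00) [el es]] := iso_one_tensor rR rS tg1 tg2 lphi iphi phiM
  degK s0 lam10 sig10 (OmK1 lam eta sig) (OmK lam1 eta1 sig1) v0.
subst lam1 sig1; split=> //.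
have u00 := iso_one_tensor_neq0 tg1 tg2 lphi iphi phiv0 v00.
by have [_ /(_ u00)] := iso_XY_tensor rR rS tg1 tg2 lphi phiM lam0
  (OmH lam eta sig) (OmH lam eta1 sig) (OmL lam eta sig) (OmL lam eta1 sig) phiv0.
Qed.

Lemma omega_tensor_iso_factor :
  lam = lam1 -> eta = eta1 -> sig = sig1 -> gmod_iso M1 M2 -> gmod_iso R S.
Proof.
move=> el ee es [phi [lphi [g phiK gK] phiM]]; subst lam1 eta1 sig1.
have iphi := can_inj phiK; have ig := can_inj gK.
have lg : linear g by move=> k x y; apply: iphi; rewrite gK lphi !gK.
have gM x w : g (gact M2 x w) = gact M1 x (g w) by apply: iphi; rewrite phiM !gK.
have [psi psiE] := functional_choice _ (fun v => (iso_one_tensor rR rS tg1 tg2 lphi iphi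
  phiM degK s0 lam10 sig10 (OmK1 lam eta sig) (OmK lam eta sig) v).1).
have [psi' psi'E] := functional_choice _ (fun u => (iso_one_tensor rS rR tg2 tg1 lg ig
  gM degK s0 lam0 sig0 (OmK1 lam eta sig) (OmK lam eta sig) u).1).
have psiXY v : phi (t1 'X_0 v) = t2 'X_0 (psi v) /\ phi (t1 'X_1 v) = t2 'X_1 (psi v).
  have [phiX _ phiY] := iso_XY_tensor rR rS tg1 tg2 lphi phiM lam0 (OmH lam eta sig)
    (OmH lam eta sig) (OmL lam eta sig) (OmL lam eta sig) (psiE v).
  by split=> //; apply: phiY.
have [lpsi ipsi psiM] :=
  iso_factor tg1 tg2 lphi iphi phiM psiE psiXY (fun=> erefl) (Om1 lam eta sig).
have psi'K u : psi (psi' u) = u by apply: (tensor1_inj tg2.1); rewrite -psiE -psi'E gK.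
by exists psi; split=> //; exists psi' => // v; apply: ipsi; rewrite psi'K.
Qed.

Lemma omega_tensor_isoP :
  gmod_iso M1 M2 <-> [/\ lam = lam1, eta = eta1, sig = sig1 & gmod_iso R S].
Proof.
split=> [iso | [el ee es isoRS]].
  have [el ee es] := omega_tensor_iso_params iso.
  by split=> //; exact: omega_tensor_iso_factor iso.
by subst lam1 eta1 sig1; exact: tensor_gmod_iso tg1 tg2 isoRS.
Qed.

End OmegaFamily.

Lemma omegaI_K l et sg m f :
  omegaI l et sg (gI m) f = (l ^ m * sg) *: shiftXY (-1) (- m%:~R) f.
Proof. by rewrite /= scalerA. Qed.

Lemma omegaI_H l et sg m : omegaI l et sg (gH m) 1 = l ^ m *: 'X_0.
Proof. by rewrite /= shiftXY1 mulr1. Qed.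

Lemma omegaI_L l et sg m : omegaI l et sg (gL m) 1 =
  l ^ m *: ('X_1 + (-1 * m%:~R) *: 'X_0 + (m%:~R * et)%:MP).
Proof. by rewrite /= shiftXY1 !mul1r mulN1r scaleNr. Qed.

Lemma omegaI_affine l et sg x : affine_XY (omegaI l et sg x 1).
Proof.
case: x => [m|m|m|m|||].
- by rewrite omegaI_L; apply/affine_XYZ/affine_XYL.
- by rewrite omegaI_H; apply/affine_XYZ/affine_XYX0.
- by rewrite omegaI_K shiftXY1; apply/affine_XYZ/affine_XY1.
all: exact: affine_XY0.
Qed.

Lemma omegaJ_K l et sg m f :
  omegaJ l et sg (gJ m) f = (l ^ m * sg) *: shiftXY 1 (- m%:~R) f.
Proof. by rewrite /= scalerA. Qed.

Lemma omegaJ_H l et sg m : omegaJ l et sg (gH m) 1 = l ^ m *: 'X_0.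
Proof. by rewrite /= shiftXY1 mulr1. Qed.

Lemma omegaJ_L l et sg m : omegaJ l et sg (gL m) 1 =
  l ^ m *: ('X_1 + (1 * m%:~R) *: 'X_0 + (m%:~R * et)%:MP).
Proof. by rewrite /= shiftXY1 !mul1r. Qed.

Lemma omegaJ_affine l et sg x : affine_XY (omegaJ l et sg x 1).
Proof.
case: x => [m|m|m|m|||].
- by rewrite omegaJ_L; apply/affine_XYZ/affine_XYL.
- by rewrite omegaJ_H; apply/affine_XYZ/affine_XYX0.
- exact: affine_XY0.
- by rewrite omegaJ_K shiftXY1; apply/affine_XYZ/affine_XY1.
all: exact: affine_XY0.
Qed.

Lemma omegaIJ_tensor_not_iso (lam eta sig lam1 eta1 sig1 : CC) (VR VS T1 T2 : lmodType CC)
    (R : gmod VR) (S : gmod VS) (M1 : gmod T1) (M2 : gmod T2)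
    (t1 : CXY -> VR -> T1) (t2 : CXY -> VS -> T2) :
  lam1 != 0 -> sig1 != 0 -> restricted R -> irreducible R -> restricted S ->
  tensor_gmod (omegaI lam eta sig) R M1 t1 -> tensor_gmod (omegaJ lam1 eta1 sig1) S M2 t2 ->
  ~ gmod_iso M1 M2.
Proof.
move=> lam10 sig10 rR [[v0 v00] _] rS tg1 tg2 [phi [lphi [g phiK _] phiM]].
have J1 m : omegaI lam eta sig (gJ m) 1 = (0 ^ m * 0) *: 1 by rewrite mulr0 scale0r.
have [_ /(_ v00) [l10 _]] := iso_one_tensor rR rS tg1 tg2 lphi (can_inj phiK) phiM
  (K := gJ) (fun=> erefl) (oner_neq0 _) lam10 sig10 J1 (omegaJ_K lam1 eta1 sig1) v0.
by move: lam10; rewrite -l10 eqxx.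
Qed.

Theorem theorem4p3 (lam lam1 sig sig1 eta eta1 : CC) :
  lam != 0 -> lam1 != 0 -> sig != 0 -> sig1 != 0 ->
  forall (VR VS : lmodType CC) (R : gmod VR) (S : gmod VS),
  restricted R -> irreducible R -> restricted S -> irreducible S ->
  [/\ (forall (T1 T2 : lmodType CC) (M1 : gmod T1) (M2 : gmod T2)
          (t1 : CXY -> VR -> T1) (t2 : CXY -> VS -> T2),
          tensor_gmod (omegaI lam eta sig) R M1 t1 ->
          tensor_gmod (omegaI lam1 eta1 sig1) S M2 t2 ->
          (gmod_iso M1 M2 <->
           [/\ lam = lam1, eta = eta1, sig = sig1 & gmod_iso R S])),
      (forall (T1 T2 : lmodType CC) (M1 : gmod T1) (M2 : gmod T2)
          (t1 : CXY -> VR -> T1) (t2 : CXY -> VS -> T2),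
          tensor_gmod (omegaJ lam eta sig) R M1 t1 ->
          tensor_gmod (omegaJ lam1 eta1 sig1) S M2 t2 ->
          (gmod_iso M1 M2 <->
           [/\ lam = lam1, eta = eta1, sig = sig1 & gmod_iso R S]))
    & (forall (T1 T2 : lmodType CC) (M1 : gmod T1) (M2 : gmod T2)
          (t1 : CXY -> VR -> T1) (t2 : CXY -> VS -> T2),
          tensor_gmod (omegaI lam eta sig) R M1 t1 ->
          tensor_gmod (omegaJ lam1 eta1 sig1) S M2 t2 ->
          ~ gmod_iso M1 M2)].
Proof.
move=> lam0 lam10 sig0 sig10 VR VS R S rR iR rS _.
have N10 : (-1 : CC) != 0 by rewrite oppr_eq0 oner_eq0.
split=> T1 T2 M1 M2 t1 t2.
- exact: (omega_tensor_isoP (K := gI) N10 (fun=> erefl) omegaI_K omegaI_H omegaI_L omegaI_affine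
    lam0 lam10 sig0 sig10 rR iR rS).
- exact: (omega_tensor_isoP (K := gJ) (oner_neq0 _) (fun=> erefl) omegaJ_K omegaJ_H omegaJ_L
    omegaJ_affine lam0 lam10 sig0 sig10 rR iR rS).
- exact: omegaIJ_tensor_not_iso.
Qed.
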